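(* Let $\epsilon\in(0,1]$, $\delta\in(0,1)$, $0<\eta\le\frac{\epsilon}{40}$. Then the Multiplicative Weights mechanism $M^*_\eta$ is $4\eta$-approximately truthful, and for every belief matrix $P\in[0,1]^{n\times m}$ and ground truth $\vec\theta\in[0,1]^m$ with $m\ge\frac{5\ln(2n/\delta)}{\eta\epsilon}$, and every report matrix $R$ in which each $r_i$ is undominated for belief $p_i$, with probability at least $1-\delta$ over $\vec y\sim\vec\theta$ and $i\sim M^*_\eta(R,\vec y)$ the selected forecaster is $\epsilon$-optimal. In particular, with $\eta=\epsilon/40$, the event complexity satisfies $m^*(n,\epsilon,\delta)\le\frac{200\ln(2n/\delta)}{\epsilon^2}$.
   Context: Setting: $n\ge2$ forecasters, $m$ independent binary events with $\Pr[y_t=1]=\theta_t$ (written $\vec y\sim\vec\theta$); forecaster $i$ has beliefs $p_i\in[0,1]^m$ and reports $r_i\in[0,1]^m$. Quadratic score $S(q,y)=1-(y-q)^2$. Accuracy $a_i=1-\frac1m\sum_t(p_{it}-\theta_t)^2$; $i$ is $\epsilon$-optimal if $a_i\ge\max_ja_j-\epsilon$. Multiplicative Weights: $M^*_\eta(R,\vec y)_i=\exp(\eta\sum_tS(r_{it},y_t))/\sum_j\exp(\eta\sum_tS(r_{jt},y_t))$. $M(R;p_i)=\mathbb{E}_{\vec y\sim p_i}M(R,\vec y)$ with $y_t\sim\mathrm{Bernoulli}(p_{it})$ independently. For fixed $p_i$, $\hat r_i$ strictly dominates $r_i$ if $M(\hat r_i,R_{-i};p_i)_i>M(r_i,R_{-i};p_i)_i$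 for all $R_{-i}$; $r_i$ is undominated otherwise. $\gamma$-approximately truthful: for all $p_i$ an undominated report exists and all undominated $r_i$ satisfy $\|r_i-p_i\|_\infty\le\gamma$. A mechanism is $(\epsilon,\delta)$-accurate in setting $(n,m,P,\vec\theta)$ if for all $R$ consisting of undominated reports, with probability $\ge1-\delta$ over $\vec y\sim\vec\theta$ and $i\sim M(R,\vec y)$, $i$ is $\epsilon$-optimal; the event complexity $m^*(n,\epsilon,\delta)$ is the smallest $m$ such that the mechanism is $(\epsilon,\delta)$-accurate for all $(P,\vec\theta)$ with $n$ forecasters and $m$ events. *)

From HB Require Import structures.
From mathcomp Require Import all_boot all_order all_algebra.
From mathcomp Require Import all_classical all_reals all_analysis.
Set Implicit Arguments. Unset Strict Implicit. Unset Printing Implicit Defensive.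
Import Order.TTheory GRing.Theory Num.Theory.
Local Open Scope ring_scope.

Section Defs.
Variables (R : realType) (n m : nat).

Definition outcome := {ffun 'I_m -> bool}.

Definition Sq (q : R) (b : bool) : R := 1 - ((b%:R : R) - q) ^+ 2.

(* report / belief matrices: rows = forecasters, columns = events *)
Definition mat := 'I_n -> 'I_m -> R.

Definition in01 (v : 'I_m -> R) : Prop := forall t, 0 <= v t <= 1.

Definition total_score (r : mat) (y : outcome) (i : 'I_n) : R :=
  \sum_(t < m) Sq (r i t) (y t).

Definition MW (eta : R) (r : mat) (y : outcome) (i : 'I_n) : R :=
  expR (eta * total_score r y i) / \sum_(j < n) expR (eta * total_score r y j).

Definition probY (th : 'I_m -> R) (y : outcome) : R :=
  \prod_(t < m) (if y t then th t else 1 - th t).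

Definition Mexp (eta : R) (r : mat) (p : 'I_m -> R) (i : 'I_n) : R :=
  \sum_(y : outcome) probY p y * MW eta r y i.

Definition upd (r : mat) (i : 'I_n) (ri : 'I_m -> R) : mat :=
  fun j => if j == i then ri else r j.

(* rhat strictly dominates ri for forecaster i with belief p:
   for all reports R_{-i} of the others (row i of r is ignored) *)
Definition strictly_dominates (eta : R) (i : 'I_n) (p : 'I_m -> R)
    (rhat ri : 'I_m -> R) : Prop :=
  forall r : mat, (forall j, in01 (r j)) ->
    Mexp eta (upd r i ri) p i < Mexp eta (upd r i rhat) p i.

Definition undominated (eta : R) (i : 'I_n) (p : 'I_m -> R)
    (ri : 'I_m -> R) : Prop :=
  in01 ri /\ ~ (exists rhat, in01 rhat /\ strictly_dominates eta i p rhat ri).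

Definition approx_truthful (eta gamma : R) : Prop :=
  forall (i : 'I_n) (p : 'I_m -> R), in01 p ->
    (exists ri, undominated eta i p ri) /\
    (forall ri, undominated eta i p ri -> forall t, `|ri t - p t| <= gamma).

Definition accuracy (P : mat) (th : 'I_m -> R) (i : 'I_n) : R :=
  1 - (\sum_(t < m) (P i t - th t) ^+ 2) / m%:R.

Definition eps_optimal (P : mat) (th : 'I_m -> R) (eps : R) (i : 'I_n) : bool :=
  [forall j, accuracy P th j - eps <= accuracy P th i].

Definition accurate (eta eps delta : R) (P : mat) (th : 'I_m -> R) : Prop :=
  forall r : mat, (forall i, undominated eta i (P i) (r i)) ->
    1 - delta <=
    \sum_(y : outcome) probY th y *
      \sum_(i < n | eps_optimal P th eps i) MW eta r y i.

End Defs.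

(* The probability MW gives forecaster i is its [share]
   a/(a + B) of the total weight.  If coordinate t of i's report lies more
   than 4 eta away from the belief, moving it by eta towards the belief
   raises the expected share: conditioning on the other events reduces this
   to a two-point inequality (nudge_up_gain), proved from first-order bounds
   on the share (share_gain_ge, share_loss_le) and the fact that one event
   moves every weight by a factor at most e^eta.  Hence undominated reports
   are 4 eta-close to beliefs; one exists as a maximiser of the continuous
   expected share on the compact cube [0,1]^m.

   MW selects i with probability at most e^(eta (S_i - S_j)) for
   the most accurate forecaster j; by independence and a one-event Hoeffding
   bound this has expectation at most exp(-(11/20) eta eps m) <= delta/(2n)
   when i is eps-suboptimal (properness of the quadratic score turns
   expected score gaps into accuracy gaps), and a union bound concludes. *)

From HB Require Import structures.
From mathcomp Require Import all_boot all_order all_algebra.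
From mathcomp Require Import all_classical all_reals all_analysis.
From mathcomp Require Import ring lra.
Import Order.TTheory GRing.Theory Num.Theory.
Local Open Scope ring_scope.
Set Implicit Arguments. Unset Strict Implicit. Unset Printing Implicit Defensive.

Section ExpBounds.
Variable R : realType.
Implicit Types x y z : R.

Lemma expR_le_inv1B x : x < 1 -> expR x <= (1 - x)^-1.
Proof.
move=> x1; have := expR_ge1Dx (- x); rewrite expRN => h.
rewrite -[expR x]invrK lef_pV2 ?posrE ?invr_gt0 ?expR_gt0 //; lra.
Qed.

Lemma expR_le_quad z : z <= 1/2 -> expR z <= 1 + z + 2 * z ^+ 2.
Proof.
move=> hz; apply: (le_trans (expR_le_inv1B (_ : z < 1))); first lra.
have h2 : 0 <= z ^+ 2 * (1 - 2 * z) by apply: mulr_ge0; [exact: sqr_ge0 | lra].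
rewrite -[(1 - z)^-1]mul1r ler_pdivrMr; nra.
Qed.

Lemma expR_le_lin y : 0 <= y <= 1/2 -> expR y <= 1 + 2 * y.
Proof.
move=> /andP[h0 h1]; apply: (le_trans (expR_le_inv1B (_ : y < 1))); first lra.
rewrite -[(1 - y)^-1]mul1r ler_pdivrMr; nra.
Qed.

End ExpBounds.

Section Share.
Variable R : realType.
Implicit Types a B u v s k P : R.

(* Fraction of the total weight held by a forecaster of weight a when the
   others hold weight B; MW assigns exactly this probability. *)
Definition share a B : R := a / (a + B).

(* a B / (a + B)^2, the derivative of share along a multiplicative change
   a |-> a * exp u at u = 0. *)
Definition share_slope a B : R := a * B / (a + B) ^+ 2.

Lemma share_slope_gt0 a B : 0 < a -> 0 < B -> 0 < share_slope a B.
Proof. by move=> ha hB; rewrite divr_gt0 ?mulr_gt0 ?exprn_gt0 ?addr_gt0. Qed.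

Lemma ler_pdiv2 (x y z w : R) : 0 < y -> 0 < w -> x * w <= z * y -> x / y <= z / w.
Proof. by move=> hy hw h; rewrite ler_pdivlMr // mulrAC ler_pdivrMr. Qed.

Lemma share_gain_ge a B u : 0 < a -> 0 < B -> 0 <= u ->
  u * expR (- u) * share_slope a B <= share (a * expR u) B - share a B.
Proof.
move=> ha hB hu; set E := expR u.
have E1 : 1 + u <= E by exact: expR_ge1Dx.
have E0 : 0 < E by exact: expR_gt0.
have hab : 0 < a * B by rewrite mulr_gt0.
have hd : 0 < a + B by rewrite addr_gt0.
have -> : share (a * E) B - share a B = a * B * (E - 1) / ((a * E + B) * (a + B)).
  by rewrite /share; field; rewrite !gt_eqF // addr_gt0 ?mulr_gt0.
have -> : u * expR (- u) * share_slope a B = a * B * u / (E * (a + B) ^+ 2).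
  by rewrite /share_slope expRN -/E; field; rewrite !gt_eqF.
apply: ler_pdiv2; rewrite ?mulr_gt0 ?exprn_gt0 ?addr_gt0 ?mulr_gt0 //.
have k1 : u * (a * E + B) <= (E - 1) * (E * (a + B)) by apply: ler_pM; nra.
have := ler_wpM2l (ltW (mulr_gt0 hab hd)) k1; lra.
Qed.

Lemma share_loss_le a B v : 0 < a -> 0 < B -> 0 <= v ->
  share a B - share (a * expR (- v)) B <= v * expR v * share_slope a B.
Proof.
move=> ha hB hv; set F := expR (- v).
have F1 : 1 - v <= F by have := expR_ge1Dx (- v); rewrite -/F; lra.
have F0 : 0 < F by exact: expR_gt0.
have F1' : F <= 1 by rewrite /F -expR0 ler_expR; lra.
have hab : 0 < a * B by rewrite mulr_gt0.
have hd : 0 < a + B by rewrite addr_gt0.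
have -> : share a B - share (a * F) B = a * B * (1 - F) / ((a + B) * (a * F + B)).
  by rewrite /share; field; rewrite !gt_eqF // addr_gt0 ?mulr_gt0.
have -> : v * expR v * share_slope a B = a * B * v / (F * (a + B) ^+ 2).
  have -> : expR v = F^-1 by rewrite /F expRN invrK.
  by rewrite /share_slope; field; rewrite !gt_eqF.
apply: ler_pdiv2; rewrite ?mulr_gt0 ?exprn_gt0 ?addr_gt0 ?mulr_gt0 //.
have k1 : (1 - F) * (F * (a + B)) <= v * (a * F + B) by apply: ler_pM; nra.
have := ler_wpM2l (ltW (mulr_gt0 hab hd)) k1; lra.
Qed.

Lemma odds_slope_ratio (w0 w1 k : R) : 0 < w0 -> 0 < w1 ->
  w1 <= k * w0 -> w0 <= k * w1 ->
  w0 / (1 + w0) ^+ 2 <= k * (w1 / (1 + w1) ^+ 2).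
Proof.
move=> h0 h1 hk1 hk0; rewrite mulrA.
apply: ler_pdiv2; rewrite ?exprn_gt0 ?addr_gt0 //.
have [le01|lt10] := leP w0 w1.
- have s1 : w0 * (1 + w1) <= w1 * (1 + w0) by nra.
  have s2 : (w0 * (1 + w1)) ^+ 2 <= (w1 * (1 + w0)) ^+ 2.
    by rewrite ler_sqr ?nnegrE //; nra.
  have s3 : w1 * (w1 * (1 + w0) ^+ 2) <= (k * w0) * (w1 * (1 + w0) ^+ 2).
    by apply: ler_wpM2r => //; apply: mulr_ge0; [lra | exact: sqr_ge0].
  have s4 : w0 * (w0 * (1 + w1) ^+ 2) <= w0 * (k * w1 * (1 + w0) ^+ 2).
    have -> : w0 * (w0 * (1 + w1) ^+ 2) = (w0 * (1 + w1)) ^+ 2 by ring.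
    have -> : w0 * (k * w1 * (1 + w0) ^+ 2) = k * w0 * (w1 * (1 + w0) ^+ 2) by ring.
    apply: le_trans s2 _.
    by have -> : (w1 * (1 + w0)) ^+ 2 = w1 * (w1 * (1 + w0) ^+ 2) by ring.
  by rewrite ler_pM2l in s4.
- apply: le_trans (_ : w0 * (1 + w0) ^+ 2 <= _).
    by apply: ler_wpM2l; [lra | rewrite ler_sqr ?nnegrE; lra].
  by apply: ler_wpM2r; [exact: sqr_ge0 | lra].
Qed.

Lemma share_slope_ratio a0 B0 a1 B1 s : 0 < a0 -> 0 < B0 -> 0 < a1 -> 0 < B1 ->
  a1 <= s * a0 -> a0 <= s * a1 -> B1 <= s * B0 -> B0 <= s * B1 ->
  share_slope a0 B0 <= s ^+ 2 * share_slope a1 B1.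
Proof.
move=> ha0 hB0 ha1 hB1 h1 h0 g1 g0.
have odds a B : 0 < a -> 0 < B -> share_slope a B = (a / B) / (1 + a / B) ^+ 2.
  by move=> ha hB; rewrite /share_slope; field; rewrite !gt_eqF // addr_gt0.
rewrite !odds //; apply: odds_slope_ratio; rewrite ?divr_gt0 //.
- rewrite ler_pdivrMr // mulrAC mulrA ler_pdivlMr //; nra.
- rewrite ler_pdivrMr // mulrAC mulrA ler_pdivlMr //; nra.
Qed.

Lemma share_tradeoff a1 B1 a0 B0 U V k P :
  0 < a1 -> 0 < B1 -> 0 < a0 -> 0 < B0 -> 0 <= U -> 0 <= V -> 0 <= P <= 1 ->
  share_slope a0 B0 <= k * share_slope a1 B1 ->
  (1 - P) * V * (expR V * k) < P * (U * expR (- U)) ->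
  0 < P * (share (a1 * expR U) B1 - share a1 B1)
      + (1 - P) * (share (a0 * expR (- V)) B0 - share a0 B0).
Proof.
move=> ha1 hB1 ha0 hB0 hU hV /andP[hP0 hP1] hslope hkey.
have gain := ler_wpM2l hP0 (share_gain_ge ha1 hB1 hU).
have loss := share_loss_le ha0 hB0 hV.
have hH1 := share_slope_gt0 ha1 hB1.
have hVe : 0 <= V * expR V by rewrite mulr_ge0 ?expR_ge0.
have hP' : 0 <= 1 - P by lra.
have loss' := ler_wpM2l hP' (le_trans loss (ler_wpM2l hVe hslope)).
have key : 0 < share_slope a1 B1 * (P * (U * expR (- U)) - (1 - P) * V * (expR V * k)).
  by rewrite mulr_gt0 // subr_gt0.
nra.
Qed.

End Share.

Section Nudge.
Variable R : realType.
Implicit Types x q e P c : R.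

Lemma Sq_true x : Sq x true = 1 - (1 - x) ^+ 2.
Proof. by []. Qed.

Lemma Sq_false x : Sq x false = 1 - x ^+ 2.
Proof. by rewrite /Sq sub0r sqrrN. Qed.

Lemma Sq_compl x b : Sq (1 - x) b = Sq x (~~ b).
Proof. by case: b; rewrite /= ?Sq_true ?Sq_false; congr (_ - _); ring. Qed.

Lemma Sq_swing q b : 0 <= q <= 1 -> Sq q b - Sq q (~~ b) <= 1.
Proof. by case: b => /andP[h0 h1]; rewrite /= ?Sq_true ?Sq_false; nra. Qed.

Lemma weight_swing eta c q b : 0 <= eta -> 0 <= c -> 0 <= q <= 1 ->
  c * expR (eta * Sq q b) <= expR eta * (c * expR (eta * Sq q (~~ b))).
Proof.
move=> he hc hq; rewrite mulrCA -expRD ler_wpM2l // ler_expR.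
have := Sq_swing b hq; nra.
Qed.

(* Numerical heart of truthfulness: with U, V the score changes caused by
   moving a report x < P - 4e up by e, the gain outweighs the loss. *)
Lemma nudge_tradeoff e P x : 0 < e -> e <= 1/40 -> 0 <= x -> x + 4 * e < P -> P <= 1 ->
  (1 - P) * (e * (e * (2 * x + e))) * (expR (e * (e * (2 * x + e))) * expR e ^+ 2)
  < P * (e * (e * (2 - 2 * x - e)) * expR (- (e * (e * (2 - 2 * x - e))))).
Proof.
move=> he he1 hx hxP hP1.
set U := e * (e * (2 - 2 * x - e)); set V := e * (e * (2 * x + e)).
have hU : 0 <= U by rewrite /U !mulr_ge0 //; lra.
have hV : 0 <= V by rewrite /V !mulr_ge0 //; lra.
have -> : expR V * expR e ^+ 2 = expR (- U) * expR (U + V + (e + e)).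
  by rewrite expr2 -!expRD; congr expR; ring.
have -> : (1 - P) * V * (expR (- U) * expR (U + V + (e + e)))
    = (1 - P) * V * expR (U + V + (e + e)) * expR (- U) by ring.
rewrite [P * _]mulrA [P * U]mulrC ltr_pM2r ?expR_gt0 //.
have hlin : expR (U + V + (e + e)) <= 1 + 2 * (U + V + (e + e)).
  by apply: expR_le_lin; rewrite /U /V; apply/andP; split; nra.
apply: le_lt_trans (ler_wpM2l (_ : 0 <= (1 - P) * V) hlin) _; first nra.
rewrite -subr_gt0.
have -> : U * P - (1 - P) * V * (1 + 2 * (U + V + (e + e)))
    = e * e * ((2 * P - 2 * x - e) - (1 - P) * (2 * x + e) * (4 * e + 4 * e ^+ 2)).
  by rewrite /U /V; ring.
rewrite !mulr_gt0 // subr_gt0.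
have hg : 0 <= 4 * e + 4 * e ^+ 2 <= 41 / 10 * e by apply/andP; split; nra.
have hPP : (1 - P) * (2 * x + e) <= 1 / 2.
  have := sqr_ge0 (2 * P - 1); nra.
apply: le_lt_trans (_ : 1 / 2 * (41 / 10 * e) < _); last lra.
apply: ler_pM; nra.
Qed.

Lemma nudge_up_gain e P x c B1 B0 : 0 < e -> e <= 1/40 -> 0 <= x -> x + 4 * e < P -> P <= 1 ->
  0 < c -> 0 < B1 -> 0 < B0 -> B1 <= expR e * B0 -> B0 <= expR e * B1 ->
  0 < P * (share (c * expR (e * Sq (x + e) true)) B1 - share (c * expR (e * Sq x true)) B1)
    + (1 - P) * (share (c * expR (e * Sq (x + e) false)) B0
                 - share (c * expR (e * Sq x false)) B0).
Proof.
move=> he he1 hx hxP hP1 hc hB1 hB0 hB10 hB01.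
have hx01 : 0 <= x <= 1 by apply/andP; split; lra.
set a1 := c * expR (e * Sq x true); set a0 := c * expR (e * Sq x false).
have -> : c * expR (e * Sq (x + e) true) = a1 * expR (e * (e * (2 - 2 * x - e))).
  by rewrite /a1 -mulrA -expRD !Sq_true; congr (_ * expR _); ring.
have -> : c * expR (e * Sq (x + e) false) = a0 * expR (- (e * (e * (2 * x + e)))).
  by rewrite /a0 -mulrA -expRD !Sq_false; congr (_ * expR _); ring.
have ha1 : 0 < a1 by rewrite mulr_gt0 ?expR_gt0.
have ha0 : 0 < a0 by rewrite mulr_gt0 ?expR_gt0.
apply: (share_tradeoff (k := expR e ^+ 2)) => //; rewrite ?mulr_ge0 //; try lra.
- apply: share_slope_ratio => //.
  + exact: (weight_swing true (ltW he) (ltW hc) hx01).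
  + exact: (weight_swing false (ltW he) (ltW hc) hx01).
- exact: nudge_tradeoff.
Qed.

Lemma nudge_down_gain e P x c B1 B0 : 0 < e -> e <= 1/40 -> x <= 1 -> P + 4 * e < x -> 0 <= P ->
  0 < c -> 0 < B1 -> 0 < B0 -> B1 <= expR e * B0 -> B0 <= expR e * B1 ->
  0 < P * (share (c * expR (e * Sq (x - e) true)) B1 - share (c * expR (e * Sq x true)) B1)
    + (1 - P) * (share (c * expR (e * Sq (x - e) false)) B0
                 - share (c * expR (e * Sq x false)) B0).
Proof.
move=> he he1 hx hxP hP0 hc hB1 hB0 hB10 hB01.
have := @nudge_up_gain e (1 - P) (1 - x) c B0 B1 he he1 _ _ _ hc hB0 hB1 hB01 hB10.
have -> : 1 - x + e = 1 - (x - e) by ring.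
have -> : 1 - (1 - P) = P by ring.
rewrite !Sq_compl /= => gain; rewrite addrC; apply: gain; lra.
Qed.

End Nudge.

Section Outcomes.
Variables (R : realType) (m : nat).
Implicit Types (p : 'I_m -> R) (t : 'I_m) (y : outcome m).

Definition flip t y : outcome m := [ffun s => if s == t then ~~ y s else y s].

Lemma flip_at t y : flip t y t = ~~ y t.
Proof. by rewrite ffunE eqxx. Qed.

Lemma flip_off t y s : s != t -> flip t y s = y s.
Proof. by move=> hs; rewrite ffunE (negbTE hs). Qed.

Lemma flipK t : involutive (flip t).
Proof.
move=> y; apply/ffunP => s; rewrite !ffunE.
by case: (eqVneq s t) => [->|]; rewrite ?eqxx ?negbK.
Qed.

Definition prob_off p t y : R :=
  \prod_(s | s != t) (if y s then p s else 1 - p s).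

Lemma prob_off_flip p t y : prob_off p t (flip t y) = prob_off p t y.
Proof. by apply: eq_bigr => s hs; rewrite flip_off. Qed.

Lemma probY_split p t y : y t ->
  probY p y = p t * prob_off p t y /\ probY p (flip t y) = (1 - p t) * prob_off p t y.
Proof.
move=> hy; split; rewrite /probY (bigD1 t) //=; first by rewrite hy.
by rewrite flip_at hy; congr (_ * _); apply: eq_bigr => s hs; rewrite flip_off.
Qed.

Lemma expectation_condition p t (G : outcome m -> R) :
  \sum_(y : outcome m) probY p y * G y =
  \sum_(y : outcome m | y t) prob_off p t y * (p t * G y + (1 - p t) * G (flip t y)).
Proof.
rewrite (bigID (fun y : outcome m => y t)) /=.
rewrite [X in _ + X](reindex_inj (inv_inj (flipK t))) /=.
rewrite [X in _ + X](eq_bigl (fun y : outcome m => y t)) => [|y]; last by rewrite flip_at negbK.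
rewrite -big_split /=; apply: eq_bigr => y hy.
by have [-> ->] := probY_split p hy; ring.
Qed.

Lemma probY_ge0 p y : in01 p -> 0 <= probY p y.
Proof. by move=> hp; apply: prodr_ge0 => t _; case/andP: (hp t); case: (y t); lra. Qed.

Lemma prob_off_ge0 p t y : in01 p -> 0 <= prob_off p t y.
Proof. by move=> hp; apply: prodr_ge0 => s _; case/andP: (hp s); case: (y s); lra. Qed.

(* Some outcome with y t true has positive probability on the other events:
   take each other event at its more likely value. *)
Lemma exists_prob_off_gt0 p t : in01 p -> exists2 y : outcome m, y t & 0 < prob_off p t y.
Proof.
move=> hp; exists [ffun s => (s == t) || (1/2 <= p s)]; first by rewrite ffunE eqxx.
apply: prodr_gt0 => s hs; rewrite ffunE (negbTE hs) /=.
by case/andP: (hp s) => h0 h1; case: (lerP (1/2) (p s)); lra.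
Qed.

Lemma expectation_prod p (f : 'I_m -> bool -> R) :
  \sum_(y : outcome m) probY p y * \prod_t f t (y t) =
  \prod_t (p t * f t true + (1 - p t) * f t false).
Proof.
rewrite (eq_bigr (fun t => \sum_(b : bool) (if b then p t else 1 - p t) * f t b));
  last by move=> t _; rewrite big_bool.
rewrite bigA_distr_bigA /=; apply: eq_bigr => y _.
by rewrite /probY -big_split.
Qed.

Lemma sum_probY p : \sum_(y : outcome m) probY p y = 1.
Proof.
transitivity (\prod_(t < m) (p t * 1 + (1 - p t) * 1)).
  rewrite -(expectation_prod p (fun _ _ => 1)).
  by apply: eq_bigr => y _; rewrite big1_eq mulr1.
by rewrite big1 // => t _; rewrite !mulr1 subrKC.
Qed.

End Outcomes.

Section Mechanism.
Variables (R : realType) (n m : nat).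
Implicit Types (eta : R) (r : mat R n m) (i j : 'I_n) (t : 'I_m) (y : outcome m)
  (p v : 'I_m -> R).

Definition row_score v y : R := \sum_t Sq (v t) (y t).

Definition score_off v t y : R := \sum_(s | s != t) Sq (v s) (y s).

Definition others_weight eta r i y : R :=
  \sum_(j | j != i) expR (eta * total_score r y j).

Definition set_coord v t (x : R) : 'I_m -> R := fun s => if s == t then x else v s.

Lemma score_off_flip v t y : score_off v t (flip t y) = score_off v t y.
Proof. by apply: eq_bigr => s hs; rewrite flip_off. Qed.

Lemma score_off_set v t x y : score_off (set_coord v t x) t y = score_off v t y.
Proof. by apply: eq_bigr => s hs; rewrite /set_coord (negbTE hs). Qed.

Lemma weight_split eta v t y :
  expR (eta * row_score v y) = expR (eta * score_off v t y) * expR (eta * Sq (v t) (y t)).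
Proof. by rewrite -expRD -mulrDr /row_score (bigD1 t) //= addrC. Qed.

Lemma MW_upd eta r i v y :
  MW eta (upd r i v) y i = share (expR (eta * row_score v y)) (others_weight eta r i y).
Proof.
rewrite /MW /share (bigD1 i) //= /total_score /upd eqxx; congr (_ / (_ + _)).
by apply: eq_bigr => j hj; rewrite (negbTE hj).
Qed.

Lemma others_weight_gt0 eta r i y : (1 < n)%N -> 0 < others_weight eta r i y.
Proof.
move=> hn; have [j hj] : exists j : 'I_n, j != i.
  have [->|hi] := eqVneq i (Ordinal (ltnW hn)); first by exists (Ordinal hn).
  by exists (Ordinal (ltnW hn)); rewrite eq_sym.
rewrite /others_weight (bigD1 j) //= ltr_pwDl ?expR_gt0 //.
by apply: sumr_ge0 => k _; exact: expR_ge0.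
Qed.

Lemma others_weight_flip eta r i y t : (forall j, in01 (r j)) -> 0 <= eta ->
  others_weight eta r i y <= expR eta * others_weight eta r i (flip t y).
Proof.
move=> hr he; rewrite /others_weight mulr_sumr; apply: ler_sum => j _.
rewrite -[total_score r y j]/(row_score (r j) y) -[total_score _ _ j]/(row_score (r j) _).
rewrite !(weight_split _ _ t) score_off_flip flip_at.
by apply: weight_swing => //; exact: hr.
Qed.

Lemma set_coord_dominates eta i p ri t x : (1 < n)%N -> 0 <= eta -> in01 p ->
  (forall c B1 B0, 0 < c -> 0 < B1 -> 0 < B0 ->
     B1 <= expR eta * B0 -> B0 <= expR eta * B1 ->
     0 < p t * (share (c * expR (eta * Sq x true)) B1
                - share (c * expR (eta * Sq (ri t) true)) B1)
       + (1 - p t) * (share (c * expR (eta * Sq x false)) B0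
                      - share (c * expR (eta * Sq (ri t) false)) B0)) ->
  strictly_dominates eta i p (set_coord ri t x) ri.
Proof.
move=> hn he hp hgain r hr.
set D := fun y => MW eta (upd r i (set_coord ri t x)) y i - MW eta (upd r i ri) y i.
rewrite -subr_gt0 /Mexp -sumrB (eq_bigr (fun y => probY p y * D y)) => [|y _];
  last by rewrite mulrBr.
rewrite (expectation_condition p t).
have gain y : y t -> 0 < p t * D y + (1 - p t) * D (flip t y).
  move=> hy; rewrite /D !MW_upd !(weight_split _ _ t) !score_off_flip !score_off_set.
  rewrite flip_at hy /set_coord eqxx /=.
  apply: hgain; rewrite ?expR_gt0 ?others_weight_gt0 //; first exact: others_weight_flip.
  by have := others_weight_flip i (flip t y) t hr he; rewrite flipK.
have [y0 hy0 hpos] := exists_prob_off_gt0 t hp.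
rewrite (bigD1 y0) //= ltr_pwDl ?mulr_gt0 ?gain //.
by apply: sumr_ge0 => y /andP[hy _]; rewrite mulr_ge0 ?prob_off_ge0 // ltW ?gain.
Qed.

(* Truthfulness: an undominated report is within 4 eta of the belief, since
   otherwise moving one coordinate by eta towards the belief dominates it. *)
Lemma undominated_near_belief eta i p ri : (1 < n)%N -> 0 < eta -> eta <= 1/40 ->
  in01 p -> undominated eta i p ri -> forall t, `|ri t - p t| <= 4 * eta.
Proof.
move=> hn he he1 hp [hri hund] t; rewrite leNgt; apply/negP => far.
case/andP: (hp t) => hp0 hp1; case/andP: (hri t) => hr0 hr1.
have in01_set x : 0 <= x <= 1 -> in01 (set_coord ri t x).
  by move=> hx s; rewrite /set_coord; case: eqP.
apply: hund; case: (ltrP (ri t) (p t)) => below.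
- rewrite ltr0_norm ?subr_lt0 // in far.
  exists (set_coord ri t (ri t + eta)); split; first by apply: in01_set; lra.
  apply: set_coord_dominates; rewrite ?ltW //.
  by move=> *; apply: nudge_up_gain => //; lra.
- rewrite ger0_norm ?subr_ge0 // in far.
  exists (set_coord ri t (ri t - eta)); split; first by apply: in01_set; lra.
  apply: set_coord_dominates; rewrite ?ltW //.
  by move=> *; apply: nudge_down_gain => //; lra.
Qed.

End Mechanism.

Import numFieldNormedType.Exports.

Section Existence.
Variables (R : realType) (n m : nat).

(* Report vectors with the product topology, in which the cube [0,1]^m is
   compact (Tychonoff) and MW's expected share is continuous. *)
Local Notation vec := {ptws 'I_m -> R^o}.

Definition cts (f : vec -> R) : Prop := forall x : vec, {for x, continuous f}.

Lemma cts_proj t : cts (fun v => v t).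
Proof. by move=> x; exact: (@proj_continuous _ (fun _ : 'I_m => R^o) t x). Qed.

Lemma cts_cst c : cts (fun _ => c).
Proof. by move=> x; exact: cst_continuous. Qed.

Lemma cts_add f g : cts f -> cts g -> cts (fun v => f v + g v).
Proof. by move=> hf hg x; exact: continuousD. Qed.

Lemma cts_mul f g : cts f -> cts g -> cts (fun v => f v * g v).
Proof. by move=> hf hg x; exact: continuousM. Qed.

Lemma cts_opp f : cts f -> cts (fun v => - f v).
Proof. by move=> hf x; exact: continuousN. Qed.

Lemma cts_inv f : cts f -> (forall v, f v != 0) -> cts (fun v => (f v)^-1).
Proof. by move=> hf h x; exact: continuousV. Qed.

Lemma cts_exp f : cts f -> cts (fun v => expR (f v)).
Proof. by move=> hf x; apply: continuous_comp (hf x) _; exact: continuous_expR. Qed.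

Lemma cts_sum (I : Type) (s : seq I) (P : pred I) (F : I -> vec -> R) :
  (forall i, cts (F i)) -> cts (fun v => \sum_(i <- s | P i) F i v).
Proof.
move=> hF; elim: s => [|a s IH]; first by under eq_fun do rewrite big_nil; exact: cts_cst.
by under eq_fun do rewrite big_cons; case: (P a) => //; exact: cts_add.
Qed.

Lemma cts_row_score y : cts (fun v : vec => row_score v y).
Proof.
apply: cts_sum => t; apply: cts_add; first exact: cts_cst.
apply: cts_opp; under eq_fun do rewrite expr2.
have hdiff : cts (fun v : vec => (y t)%:R - v t).
  by apply: cts_add; [exact: cts_cst | exact/cts_opp/cts_proj].
exact: cts_mul.
Qed.

Lemma cube_compact : compact [set v : vec | forall t, `[0, 1]%classic (v t)].
Proof.
exact: (@tychonoff _ (fun _ => R^o) (fun _ => `[0, 1]%classic)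
  (fun _ => @segment_compact R 0 1)).
Qed.

(* Every belief admits an undominated report: a maximiser, over the cube, of
   the expected share against arbitrary fixed opponents cannot be strictly
   dominated (it exists by the extreme value theorem). *)
Lemma exists_undominated eta (i : 'I_n) (p : 'I_m -> R) : exists ri, undominated eta i p ri.
Proof.
pose r0 : mat R n m := fun _ _ => 0.
pose F : vec -> R := fun v => Mexp eta (upd r0 i v) p i.
have hF : cts F.
  have -> : F = fun v => \sum_(y : outcome m) probY p y *
      (expR (eta * row_score v y) * (expR (eta * row_score v y) + others_weight eta r0 i y)^-1).
    by apply: funext => v; apply: eq_bigr => y _; rewrite MW_upd.
  have hw y : cts (fun v => expR (eta * row_score v y)).
    by apply/cts_exp/cts_mul; [exact: cts_cst | exact: cts_row_score].
  apply: cts_sum => y; apply: cts_mul; first exact: cts_cst.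
  apply: cts_mul; first exact: hw.
  apply: cts_inv => [|v]; first by apply: cts_add; [exact: hw | exact: cts_cst].
  rewrite gt_eqF // ltr_pwDl ?expR_gt0 //.
  by apply: sumr_ge0 => j _; exact: expR_ge0.
have cube0 : ([set v : vec | forall t, `[0, 1]%classic (v t)] !=set0)%classic.
  by exists (fun _ => 0) => t /=; rewrite in_itv /= lexx ler01.
have [c hc cmax] := compact_EVT_max cube0 cube_compact (continuous_subspaceT hF).
have hc01 : in01 c by move=> t; move: hc; rewrite inE => /(_ t) /=; rewrite in_itv.
exists c; split=> // -[rh [hrh hdom]].
have r0_in01 j : in01 (r0 j) by move=> t; rewrite /r0 lexx ler01.
have := hdom r0 r0_in01.
have : F rh <= F c by apply: cmax; rewrite inE => t /=; rewrite in_itv /=; exact: hrh.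
rewrite /F; lra.
Qed.

End Existence.

Section Concentration.
Variable R : realType.
Implicit Types eta th x q p : R.

Lemma mgf_two_point eta th d1 d0 : 0 < eta -> eta <= 1/2 -> 0 <= th <= 1 ->
  -1 <= d1 <= 1 -> -1 <= d0 <= 1 ->
  th * expR (eta * d1) + (1 - th) * expR (eta * d0)
    <= expR (eta * (th * d1 + (1 - th) * d0) + 2 * eta ^+ 2).
Proof.
move=> he he1 /andP[t0 t1] hd1 hd0.
have quad d : -1 <= d <= 1 -> expR (eta * d) <= 1 + eta * d + 2 * eta ^+ 2.
  move=> /andP[d0' d1']; apply: le_trans (expR_le_quad _) _; first nra.
  have : (eta * d) ^+ 2 <= eta ^+ 2.
    by rewrite exprMn ler_piMr ?sqr_ge0 // expr2; nra.
  lra.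
apply: le_trans (expR_ge1Dx _).
have := ler_wpM2l t0 (quad _ hd1); have := ler_wpM2l (_ : 0 <= 1 - th) (quad _ hd0).
nra.
Qed.

Lemma Sq_diff_bounds x q b : 0 <= x <= 1 -> 0 <= q <= 1 -> -1 <= Sq x b - Sq q b <= 1.
Proof.
by move=> /andP[? ?] /andP[? ?]; case: b; rewrite ?Sq_true ?Sq_false; apply/andP; split; nra.
Qed.

Lemma expected_Sq_diff th x q :
  th * (Sq x true - Sq q true) + (1 - th) * (Sq x false - Sq q false)
  = (q - th) ^+ 2 - (x - th) ^+ 2.
Proof. by rewrite !Sq_true !Sq_false; ring. Qed.

Lemma sq_err_perturb eta th x p : 0 <= th <= 1 -> 0 <= x <= 1 -> 0 <= p <= 1 ->
  `|x - p| <= 4 * eta -> `|(x - th) ^+ 2 - (p - th) ^+ 2| <= 8 * eta.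
Proof.
move=> ht hx hp hxp.
have -> : (x - th) ^+ 2 - (p - th) ^+ 2 = (x - p) * (x + p - 2 * th) by ring.
rewrite normrM.
have : `|x + p - 2 * th| <= 2 by rewrite ler_norml; apply/andP; split; lra.
have := normr_ge0 (x - p); have := normr_ge0 (x + p - 2 * th); nra.
Qed.

End Concentration.

Section Accuracy.
Variables (R : realType) (n m : nat).
Implicit Types (eta : R) (r P : mat R n m) (th : 'I_m -> R) (i j : 'I_n).

Lemma MW_le_score_gap eta r y i j :
  MW eta r y i <= expR (eta * (total_score r y i - total_score r y j)).
Proof.
have hsum : expR (eta * total_score r y j) <= \sum_k expR (eta * total_score r y k).
  by rewrite (bigD1 j) //= lerDl; apply: sumr_ge0 => k _; exact: expR_ge0.
rewrite /MW mulrBr expRB; apply: ler_wpM2l; first exact: expR_ge0.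
rewrite lef_pV2 ?posrE ?expR_gt0 //.
exact: lt_le_trans (expR_gt0 _) hsum.
Qed.

Definition expected_gap th r i j (t : 'I_m) : R :=
  th t * (Sq (r i t) true - Sq (r j t) true)
  + (1 - th t) * (Sq (r i t) false - Sq (r j t) false).

Lemma sum_sq_err P th j : (0 < m)%N ->
  \sum_(t < m) (P j t - th t) ^+ 2 = m%:R * (1 - accuracy P th j).
Proof. by move=> hm; rewrite /accuracy; field; rewrite pnatr_eq0 -lt0n. Qed.

(* Chernoff step: by independence and the two-point mgf bound, the expected
   MW probability of i is exponentially small in its total expected gap. *)
Lemma expected_MW_le eta r th i j : 0 < eta -> eta <= 1/2 ->
  (forall k, in01 (r k)) -> in01 th ->
  \sum_(y : outcome m) probY th y * MW eta r y i
    <= expR (eta * \sum_t expected_gap th r i j t + 2 * eta ^+ 2 * m%:R).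
Proof.
move=> he he1 hr hth.
pose f t b := expR (eta * (Sq (r i t) b - Sq (r j t) b)).
apply: le_trans (_ : \sum_(y : outcome m) probY th y * \prod_t f t (y t) <= _).
  apply: ler_sum => y _; rewrite ler_wpM2l ?probY_ge0 //.
  apply: le_trans (MW_le_score_gap _ _ _ i j) _.
  by rewrite /f -expR_sum /total_score -sumrB mulr_sumr.
have -> : eta * \sum_t expected_gap th r i j t + 2 * eta ^+ 2 * m%:R
    = \sum_t (eta * expected_gap th r i j t + 2 * eta ^+ 2).
  by rewrite [RHS]big_split /= -mulr_sumr sumr_const card_ord mulr_natr.
rewrite expectation_prod expR_sum.
apply: ler_prod => t _; apply/andP; split.
  by case/andP: (hth t) => h0 h1; rewrite addr_ge0 // mulr_ge0 ?expR_ge0 //; lra.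
by apply: mgf_two_point; rewrite ?hth ?Sq_diff_bounds ?hr.
Qed.

Lemma sum_expected_gap_le eta r P th i j : (0 < m)%N ->
  (forall k, in01 (P k)) -> (forall k, in01 (r k)) -> in01 th ->
  (forall k t, `|r k t - P k t| <= 4 * eta) ->
  \sum_t expected_gap th r i j t
    <= m%:R * (accuracy P th i - accuracy P th j) + 16 * eta * m%:R.
Proof.
move=> hm hP hr hth hrP.
have gap t : expected_gap th r i j t
    <= (P j t - th t) ^+ 2 - (P i t - th t) ^+ 2 + 16 * eta.
  rewrite /expected_gap expected_Sq_diff.
  have := sq_err_perturb (hth t) (hr j t) (hP j t) (hrP j t).
  have := sq_err_perturb (hth t) (hr i t) (hP i t) (hrP i t).
  rewrite !ler_norml => /andP[? ?] /andP[? ?]; lra.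
apply: le_trans (ler_sum _ (fun t _ => gap t)) _.
rewrite big_split sumrB /= !sum_sq_err // sumr_const card_ord -mulr_natr; lra.
Qed.

Lemma suboptimal_weight_le eta eps r P th i j : 0 < eta -> eta <= eps / 40 -> eps <= 1 ->
  (0 < m)%N -> (forall k, in01 (P k)) -> (forall k, in01 (r k)) -> in01 th ->
  (forall k t, `|r k t - P k t| <= 4 * eta) ->
  accuracy P th i < accuracy P th j - eps ->
  \sum_(y : outcome m) probY th y * MW eta r y i <= expR (- (11 / 20 * (eta * eps * m%:R))).
Proof.
move=> he he1 heps hm hP hr hth hrP hacc.
have he2 : eta <= 1/2 by lra.
apply: le_trans (expected_MW_le i j he he2 hr hth) _.
rewrite ler_expR.
have hgap := sum_expected_gap_le i j hm hP hr hth hrP.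
have hm0 : 0 <= (m%:R : R) by rewrite ler0n.
have := ler_wpM2l (ltW he) hgap.
have := ler_wpM2l hm0 (ltW hacc).
have := ler_wpM2r hm0 (ler_wpM2l (ltW he) he1).
rewrite expr2; nra.
Qed.

End Accuracy.

Section Main.
Variables (R : realType) (n m : nat).
Implicit Types (eta eps delta : R) (r P : mat R n m) (th : 'I_m -> R).

Lemma MW_approx_truthful eta : (1 < n)%N -> 0 < eta -> eta <= 1/40 ->
  approx_truthful n m eta (4 * eta).
Proof.
move=> hn he he1 i p hp; split; first exact: exists_undominated.
by move=> ri; exact: undominated_near_belief.
Qed.

Lemma sum_MW eta r y : (0 < n)%N -> \sum_i MW eta r y i = 1.
Proof.
move=> hn; rewrite /MW -mulr_suml divff // gt_eqF //.
rewrite (bigD1 (Ordinal hn)) //= ltr_pwDl ?expR_gt0 //.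
by apply: sumr_ge0 => k _; exact: expR_ge0.
Qed.

Lemma accurate_union_bound eta eps delta P th r (c : R) : (0 < n)%N -> 0 <= c ->
  n%:R * c <= delta ->
  (forall i, ~~ eps_optimal P th eps i ->
     \sum_(y : outcome m) probY th y * MW eta r y i <= c) ->
  1 - delta <= \sum_(y : outcome m) probY th y *
                 \sum_(i < n | eps_optimal P th eps i) MW eta r y i.
Proof.
move=> hn hc hnc hbad; set opt := eps_optimal P th eps.
have good y : \sum_(i | opt i) MW eta r y i = 1 - \sum_(i | ~~ opt i) MW eta r y i.
  by have := sum_MW eta r y hn; rewrite (bigID opt) /= => <-; rewrite addrK.
rewrite (eq_bigr (fun y => probY th y - probY th y * \sum_(i | ~~ opt i) MW eta r y i));
  last by move=> y _; rewrite good mulrBr mulr1.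
rewrite sumrB sum_probY lerD2l lerN2.
under eq_bigr do rewrite mulr_sumr.
rewrite exchange_big /=; apply: le_trans (ler_sum _ hbad) _.
apply: le_trans hnc; have -> : n%:R * c = \sum_(i < n) c by rewrite sumr_const card_ord mulr_natl.
by rewrite [X in _ <= X](bigID (fun i => ~~ opt i)) /= lerDl sumr_ge0.
Qed.

Lemma MW_accurate eta eps delta P th : (1 < n)%N -> 0 < eps <= 1 -> 0 < delta < 1 ->
  0 < eta -> eta <= eps / 40 -> (forall i, in01 (P i)) -> in01 th ->
  5 * ln (2 * n%:R / delta) / (eta * eps) <= m%:R ->
  accurate eta eps delta P th.
Proof.
move=> hn /andP[e0 e1] /andP[d0 d1] he he1 hP hth hm r hund.
have hr j : in01 (r j) by case: (hund j).
have hrP j t : `|r j t - P j t| <= 4 * eta.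
  by apply: (undominated_near_belief hn he _ (hP j) (hund j)); lra.
have hn0 : (0 < n)%N by apply: ltnW.
have hn2 : (2 : R) <= n%:R by rewrite (ler_nat R 2 n).
set K := 2 * n%:R / delta.
have hK1 : 1 < K by rewrite /K ltr_pdivlMr // mul1r; lra.
have hmK : 5 * ln K <= eta * eps * m%:R.
  by move: hm; rewrite ler_pdivrMr ?mulr_gt0 // [m%:R * _]mulrC.
have hlnK : 0 < ln K by rewrite ln_gt0.
have hm0 : (0 < m)%N.
  by rewrite lt0n; apply/negP => /eqP hm0; move: hmK; rewrite hm0 mulr0; lra.
have [best _ hbest] := @arg_maxP _ _ _ (Ordinal hn0) xpredT (accuracy P th) isT.
apply: (accurate_union_bound (c := K^-1)) => //.
- by rewrite invr_ge0 ltW // (lt_trans ltr01).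
- have -> : n%:R * K^-1 = delta / 2 by rewrite /K; field; rewrite !gt_eqF //; lra.
  lra.
- move=> i /forallPn [j]; rewrite -ltNge => hj.
  apply: le_trans (suboptimal_weight_le he he1 e1 hm0 hP hr hth hrP (j := best) _) _.
    by move: (hbest j isT) => /= hjbest; lra.
  by rewrite -[K]lnK ?posrE ?(lt_trans ltr01) // -expRN ler_expR; lra.
Qed.

End Main.

Unset Implicit Arguments.

Theorem mainTheorem10 (R : realType) (n m : nat) (eps delta eta : R) :
  (2 <= n)%N -> 0 < eps <= 1 -> 0 < delta < 1 -> 0 < eta <= eps / 40 ->
  approx_truthful n m eta (4 * eta) /\
  (forall (P : mat R n m) (th : 'I_m -> R),
     (forall i, in01 (P i)) -> in01 th ->
     5 * ln (2 * n%:R / delta) / (eta * eps) <= m%:R ->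
     accurate eta eps delta P th) /\
  (200 * ln (2 * n%:R / delta) / eps ^+ 2 <= m%:R ->
   forall (P : mat R n m) (th : 'I_m -> R),
     (forall i, in01 (P i)) -> in01 th ->
     accurate (eps / 40) eps delta P th).
Proof.
move=> hn heps hdelta /andP[he he1]; have /andP[e0 e1] := heps.
split; first by apply: MW_approx_truthful => //; lra.
split; first by move=> P th hP hth hm; exact: MW_accurate.
move=> hm P th hP hth; apply: MW_accurate; rewrite ?divr_gt0 //.
suff -> : 5 * ln (2 * n%:R / delta) / (eps / 40 * eps)
        = 200 * ln (2 * n%:R / delta) / eps ^+ 2 by [].
by field; rewrite gt_eqF.
Qed.
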